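(* Let $\nu,b,c,t$ be positive integers with $2\nu\ge 2b+c+1$, $\nu>b\ge t+1$ and $c\ge t$. For $x\in\{t,t+1,\dots,b\}$ let $$g_{b,c}(x)={x\brack t}{c-t+1\brack 1}^{x-t}N'(x;b;2\nu).$$ Then $g_{b,c}(x+1)<g_{b,c}(x)$ for every $x\in\{t,\dots,b-1\}$, i.e. $g_{b,c}$ is strictly decreasing on $\{t,\dots,b\}$.
   Context: $q$ is a prime power. Gaussian binomial coefficient: ${n\brack k}=\prod_{i=0}^{k-1}\frac{q^{n-i}-1}{q^{k-i}-1}$, ${n\brack 0}=1$. For integers $0\le a\le m\le\nu$, $N'(a;m;2\nu)=\prod_{i=1}^{m-a}\frac{q^{2(\nu-m+i)}-1}{q^{i}-1}$. *)

From mathcomp Require Import all_boot all_order all_algebra.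
Set Implicit Arguments. Unset Strict Implicit. Unset Printing Implicit Defensive.
Import Order.TTheory GRing.Theory Num.Theory.
Local Open Scope ring_scope.

Definition gauss (q n k : nat) : rat :=
  \prod_(0 <= i < k) (((q ^ (n - i))%:R - 1) / ((q ^ (k - i))%:R - 1)).

Definition Nprime (q a m nu : nat) : rat :=
  \prod_(1 <= i < (m - a).+1) (((q ^ (2 * (nu - m + i)))%:R - 1) / ((q ^ i)%:R - 1)).

Definition g_bc (q nu b c t x : nat) : rat :=
  gauss q x t * (gauss q (c - t + 1) 1) ^+ (x - t) * Nprime q x b nu.

(* Writing F n = q^n - 1, the ratio g(x+1)/g(x) is
     F(x+1) F(c-t+1) F(b-x) / (F(x+1-t) F(1) F(2(nu-x))).
   Since F(m+n) < q^(m+1) F(n), F(m) F(n) <= F(m+n) and q^m F(n) < F(m+n)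
   for m > 0, the numerator is below F(x+1-t) F(c+b-x+2), and
   c+b-x+2 <= 2(nu-x) because x <= b-1 and 2b+c+1 <= 2nu. *)
From mathcomp Require Import all_boot all_order all_algebra.
From mathcomp Require Import zify ring lra.
Set Implicit Arguments. Unset Strict Implicit. Unset Printing Implicit Defensive.
Import Order.TTheory GRing.Theory Num.Theory.
Local Open Scope ring_scope.

Definition Fq (q n : nat) : rat := (q ^ n)%:R - 1.

Section QPowerMinusOne.
Variable q : nat.
Local Notation F := (Fq q).

Lemma gauss_succ x t : gauss q x.+1 t * F (x.+1 - t) = gauss q x t * F x.+1.
Proof.
rewrite /gauss !prodf_div mulrAC [in RHS]mulrAC; congr (_ / _).
rewrite -(big_nat_recr t 0 (fun i => F (x.+1 - i))) //.
by rewrite big_nat_recl // mulrC.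
Qed.

Lemma gauss1 n : gauss q n 1 = F n / F 1.
Proof. by rewrite /gauss big_nat1 !subn0. Qed.

Lemma Nprime_succ x b nu : (x < b)%N -> (b <= nu)%N ->
  Nprime q x b nu = Nprime q x.+1 b nu * (F (2 * (nu - x)) / F (b - x)).
Proof.
move=> xb bnu; rewrite /Nprime.
have -> : (b - x = (b - x.+1).+1)%N by lia.
rewrite big_nat_recr //=; congr (_ * (_ / _)).
by rewrite /Fq; do 3 f_equal; lia.
Qed.

Hypothesis q_gt1 : (1 < q)%N.

Lemma natr_exp_ge1 n : 1 <= (q ^ n)%:R :> rat.
Proof. by rewrite ler1n expn_gt0 ltnW. Qed.

Lemma Fq_ge0 n : 0 <= F n.
Proof. by rewrite subr_ge0 natr_exp_ge1. Qed.

Lemma Fq_gt0 n : (0 < n)%N -> 0 < F n.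
Proof. by move=> n_gt0; rewrite subr_gt0 ltr1n -(expn0 q) ltn_exp2l. Qed.

Lemma Fq_le m n : (m <= n)%N -> F m <= F n.
Proof. by move=> mn; rewrite lerB // ler_nat leq_pexp2l // ltnW. Qed.

Lemma Fq_exp_mul_lt m n : (0 < m)%N -> (q ^ m)%:R * F n < F (m + n).
Proof.
move=> m_gt0; rewrite /Fq mulrBr mulr1 -natrM -expnD ler_ltB // ltr1n.
by rewrite -(expn0 q) ltn_exp2l.
Qed.

Lemma Fq_mul_le m n : F m * F n <= F (m + n).
Proof.
have := natr_exp_ge1 m; have := natr_exp_ge1 n.
by rewrite /Fq expnD natrM; nra.
Qed.

Lemma Fq_lt_exp_mul m n : (0 < n)%N -> F (m + n) < (q ^ m.+1)%:R * F n.
Proof.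
move=> n_gt0.
rewrite /Fq expnS expnD !natrM.
set Q : rat := q%:R; set A : rat := (q ^ m)%:R; set B : rat := (q ^ n)%:R.
have Q2 : 2 <= Q by rewrite ler_nat.
have A1 : 1 <= A := natr_exp_ge1 m.
have QB : Q <= B by rewrite ler_nat -{1}(expn1 q) leq_pexp2l // ltnW.
have QAB : 0 <= (Q - 2) * (A * B) by rewrite mulr_ge0 ?subr_ge0 // mulr_ge0; lra.
have ABQ : 0 <= A * (B - Q) by rewrite mulr_ge0 ?subr_ge0 //; lra.
nra.
Qed.

Lemma Fq_ratio_lt m n a d e : (0 < n)%N -> (m.+1 + a + d <= e)%N ->
  F (m + n) * F a * F d < F n * F 1 * F e.
Proof.
move=> n_gt0 le_e.
have Fn_gt0 : 0 < F n by apply: Fq_gt0.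
have Fad_ge0 : 0 <= F a * F d by rewrite mulr_ge0 ?Fq_ge0.
have F1_ge1 : 1 <= F 1.
  have q_ge2 : 2%:R <= q%:R :> rat by rewrite ler_nat.
  rewrite /Fq expn1; lra.
have exp_ad : (q ^ m.+1)%:R * F (a + d) < F e.
  have le_e' : (m.+1 + (a + d) <= e)%N by rewrite addnA.
  exact: lt_le_trans (Fq_exp_mul_lt (a + d) (ltn0Sn m)) (Fq_le le_e').
have le_exp_Fn : F (m + n) * (F a * F d) <= (q ^ m.+1)%:R * F n * (F a * F d).
  by apply: ler_wpM2r => //; exact/ltW/Fq_lt_exp_mul.
have lt_Fn_Fe : (q ^ m.+1)%:R * F n * (F a * F d) < F n * F e.
  rewrite [_ * F n]mulrC -mulrA ltr_pM2l //.
  exact: le_lt_trans (ler_wpM2l (ler0n _ _) (Fq_mul_le a d)) exp_ad.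
have le_Fn_F1_Fe : F n * F e <= F n * (F 1 * F e).
  by rewrite ler_pM2l // ler_peMl // Fq_ge0.
by rewrite -!mulrA; apply: le_lt_trans le_exp_Fn (lt_le_trans lt_Fn_Fe le_Fn_F1_Fe).
Qed.

Lemma gauss_gt0 x t : (t <= x)%N -> 0 < gauss q x t.
Proof.
move=> le_tx; rewrite /gauss big_seq; apply: prodr_gt0 => i.
by rewrite mem_index_iota => /andP[_ lt_it]; rewrite divr_gt0 // Fq_gt0 //; lia.
Qed.

Lemma Nprime_gt0 a m nu : 0 < Nprime q a m nu.
Proof.
rewrite /Nprime big_seq; apply: prodr_gt0 => i.
by rewrite mem_index_iota => /andP[i_gt0 _]; rewrite divr_gt0 // Fq_gt0 //; lia.
Qed.

Lemma g_bc_gt0 nu b c t x : (t <= x)%N -> 0 < g_bc q nu b c t x.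
Proof.
move=> le_tx; rewrite /g_bc gauss1 !mulr_gt0 ?gauss_gt0 ?Nprime_gt0 //.
by rewrite exprn_gt0 // divr_gt0 // Fq_gt0 // addn1.
Qed.

Lemma g_bc_succ nu b c t x : (t <= x)%N -> (x < b)%N -> (b <= nu)%N ->
  g_bc q nu b c t x.+1 * (F (x.+1 - t) * F 1 * F (2 * (nu - x))) =
  g_bc q nu b c t x * (F x.+1 * F (c - t + 1) * F (b - x)).
Proof.
move=> le_tx lt_xb le_bnu.
have F1_neq0 : F 1 != 0 by rewrite gt_eqF // Fq_gt0.
have Fbx_neq0 : F (b - x) != 0 by rewrite gt_eqF // Fq_gt0 // subn_gt0.
have Fxt_neq0 : F (x - t).+1 != 0 by rewrite gt_eqF // Fq_gt0.
have gauss_x1 : gauss q x.+1 t = gauss q x t * F x.+1 / F (x - t).+1.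
  by rewrite -gauss_succ subSn // mulfK.
rewrite /g_bc (Nprime_succ lt_xb le_bnu) gauss1 gauss_x1 subSn // exprSr.
by field; rewrite F1_neq0 Fbx_neq0 Fxt_neq0.
Qed.

End QPowerMinusOne.

Theorem lemma3p1 (p k q nu b c t : nat) :
  prime p -> (0 < k)%N -> q = (p ^ k)%N ->
  (0 < nu)%N -> (0 < b)%N -> (0 < c)%N -> (0 < t)%N ->
  (2 * b + c + 1 <= 2 * nu)%N -> (b < nu)%N -> (t + 1 <= b)%N -> (t <= c)%N ->
  forall x : nat, (t <= x)%N -> (x <= b - 1)%N ->
    g_bc q nu b c t x.+1 < g_bc q nu b c t x.
Proof.
move=> p_prime k_gt0 q_def _ _ _ _ le_nu lt_bnu le_tb le_tc x le_tx le_xb.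
have q_gt1 : (1 < q)%N by rewrite q_def -(expn0 p) ltn_exp2l // prime_gt1.
clear q_def.
have lt_xb : (x < b)%N by lia.
have den_gt0 : 0 < Fq q (x.+1 - t) * Fq q 1 * Fq q (2 * (nu - x)).
  by rewrite !mulr_gt0 // Fq_gt0 //; lia.
rewrite -(ltr_pM2r den_gt0) (g_bc_succ q_gt1 c le_tx lt_xb (ltnW lt_bnu)).
rewrite ltr_pM2l ?g_bc_gt0 //.
have -> : x.+1 = (t + (x.+1 - t))%N by rewrite subnKC // ltnW.
rewrite addKn; apply: Fq_ratio_lt => //; lia.
Qed.
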